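(* Let $R$ be a generalized Rickart $*$-ring and let $B$ be a $*$-subring of $R$ such that (1) $B$ has a unity element, and (2) for every $x\in B$, $GRP(x)\in B$ (where $GRP(x)$ is a generalized right projection of $x$ in $R$). Then $B$ is a generalized Rickart $*$-ring.
   Context: A $*$-ring is an associative ring $R$ with an involution $x\mapsto x^*$ (additive, $(xy)^*=y^*x^*$, $x^{**}=x$); a $*$-subring is a subring closed under $*$. A projection is an element $e$ with $e=e^*=e^2$. For $a$ in a ring $S$, $r(a)=\{b\in S: ab=0\}$. A $*$-ring $S$ is a generalized Rickart $*$-ring if for every $x\in S$ there exist a positive integer $n$ and a projection $g\in S$ with $r(x^n)=gS$. A projection $e\in R$ is a generalized right projection of $x\in R$, written $GRP(x)=e$, if there exists $n\in\mathbb N$ with $x^ne=x^n$ and, for all $y\in R$, $x^ny=0$ implies $ey=0$. *)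

From mathcomp Require Import all_boot all_order all_algebra.
Set Implicit Arguments. Unset Strict Implicit. Unset Printing Implicit Defensive.
Import GRing.Theory.
Local Open Scope ring_scope.

Definition is_involution (R : pzRingType) (s : R -> R) : Prop :=
  (forall x y : R, s (x + y) = s x + s y) /\
  (forall x y : R, s (x * y) = s y * s x) /\
  (forall x : R, s (s x) = x).

Definition is_projection (R : pzRingType) (s : R -> R) (e : R) : Prop :=
  e = s e /\ e = e * e.

(* S is a *-subring of R: contains 0, closed under +, -, * and the involution.
   (A subring need not contain the unity of R.) *)
Definition is_star_subring (R : pzRingType) (s : R -> R) (S : pred R) : Prop :=
  0 \in S /\
  (forall x y, x \in S -> y \in S -> x + y \in S) /\
  (forall x, x \in S -> - x \in S) /\
  (forall x y, x \in S -> y \in S -> x * y \in S) /\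
  (forall x, x \in S -> s x \in S).

Definition has_unity (R : pzRingType) (S : pred R) : Prop :=
  exists2 u, u \in S & forall b, b \in S -> u * b = b /\ b * u = b.

(* The *-ring S (a *-subring of R, with the restricted operations) is a
   generalized Rickart *-ring: for every x in S there are n >= 1 and a
   projection g in S with r_S(x^n) = g S, where
   r_S(a) = {b in S | a b = 0} and g S = {g c | c in S}. *)
Definition gen_rickart_on (R : pzRingType) (s : R -> R) (S : pred R) : Prop :=
  forall x, x \in S ->
    exists n : nat, (0 < n)%N /\
      exists2 g, g \in S &
        is_projection s g /\
        (forall b, (b \in S /\ x ^+ n * b = 0) <-> exists2 c, c \in S & b = g * c).

Definition gen_rickart (R : pzRingType) (s : R -> R) : Prop :=
  gen_rickart_on s predT.

Definition is_GRP (R : pzRingType) (s : R -> R) (x e : R) : Prop :=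
  is_projection s e /\
  exists n : nat, (0 < n)%N /\ x ^+ n * e = x ^+ n /\
    (forall y : R, x ^+ n * y = 0 -> e * y = 0).

From mathcomp Require Import all_boot all_order all_algebra.
Local Open Scope ring_scope.
Import GRing.Theory.

(* If [e] is a generalized right projection of [x ∈ B] and [u] is the unity
   of [B], then [x^n b = 0] iff [e b = 0] for [b ∈ B], and [e b = 0] iff
   [b = (u - e) b]; so [r_B(x^n) = (u - e) B], and [u - e] is a projection
   of [B] because [u] is a projection commuting with [e]. *)

Section Involution.

Variables (R : pzRingType) (s : R -> R).
Hypothesis s_inv : is_involution s.

Lemma involution0 : s 0 = 0.
Proof.
have [sD _] := s_inv.
by apply: (@addrI _ (s 0)); rewrite addr0 -sD addr0.
Qed.

Lemma involutionB x y : s (x - y) = s x - s y.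
Proof.
have [sD _] := s_inv.
have sN : s (- y) = - s y.
  by apply: (@addrI _ (s y)); rewrite -sD !subrr involution0.
by rewrite sD sN.
Qed.

Lemma projection_subr u e :
  is_projection s u -> is_projection s e -> u * e = e -> e * u = e ->
  is_projection s (u - e).
Proof.
move=> [us uu] [es ee] ue eu; split; first by rewrite involutionB -us -es.
by rewrite mulrBl !mulrBr -uu ue eu -ee subrr subr0.
Qed.

Section StarSubring.

Variables (B : pred R) (u : R).
Hypothesis B_star : is_star_subring s B.
Hypothesis uB : u \in B.
Hypothesis u_unity : forall b, b \in B -> u * b = b /\ b * u = b.

Lemma star_subring_exprS_closed x n : x \in B -> x ^+ n.+1 \in B.
Proof.
have [_ [_ [_ [BM _]]]] := B_star.
move=> xB; elim: n => [|n IHn]; first by rewrite expr1.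
by rewrite exprS; apply: BM.
Qed.

Lemma unity_projection : is_projection s u.
Proof.
have [_ [sM sK]] := s_inv; have [_ [_ [_ [_ Bs]]]] := B_star.
have [usu _] := u_unity _ (Bs _ uB).
split; last by have [] := u_unity _ uB.
by have := sM u (s u); rewrite usu sK usu.
Qed.

Lemma GRP_right_annihilator x e n :
  x \in B -> e \in B -> (0 < n)%N -> x ^+ n * e = x ^+ n ->
  (forall y, x ^+ n * y = 0 -> e * y = 0) ->
  forall b, (b \in B /\ x ^+ n * b = 0) <-> exists2 c, c \in B & b = (u - e) * c.
Proof.
have [_ [BD [BN [BM _]]]] := B_star.
move=> xB eB n_gt0 xne xn_ann b; split.
  move=> [bB xnb]; exists b => //.
  by have [ub _] := u_unity _ bB; rewrite mulrBl ub xn_ann // subr0.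
move=> [c cB ->]; split; first by rewrite BM // BD // BN.
have xnB : x ^+ n \in B by rewrite -(prednK n_gt0) star_subring_exprS_closed.
have [_ xnu] := u_unity _ xnB.
by rewrite mulrA mulrBr xnu xne subrr mul0r.
Qed.

Lemma gen_rickart_on_of_GRP :
  (forall x, x \in B -> exists2 e, e \in B & is_GRP s x e) ->
  gen_rickart_on s B.
Proof.
have [_ [BD [BN _]]] := B_star.
move=> B_GRP x xB; have [e eB [e_proj [n [n_gt0 [xne xn_ann]]]]] := B_GRP x xB.
exists n; split=> //; exists (u - e); first by rewrite BD // BN.
have [ue eu] := u_unity _ eB.
split; first exact: projection_subr unity_projection e_proj ue eu.
exact: GRP_right_annihilator.
Qed.

End StarSubring.

End Involution.

Theorem mainTheorem4 (R : pzRingType) (s : R -> R) (B : pred R) :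
  is_involution s ->
  gen_rickart s ->
  is_star_subring s B ->
  has_unity B ->
  (forall x, x \in B -> exists2 e, e \in B & is_GRP s x e) ->
  gen_rickart_on s B.
Proof.
move=> s_inv _ B_star [u uB u_unity].
exact: (@gen_rickart_on_of_GRP R s s_inv B u B_star uB u_unity).
Qed.
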